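(* Let $\mathcal{M}$ be a model category with localization functor $h:\mathcal{M}\to\mathbf{Ho}(\mathcal{M})$. If two diagrams $F:\underline{I}\to\mathcal{M}$ and $G:\underline{J}\to\mathcal{M}$ (objects of $\mathrm{diag}(\mathcal{M})$) are related by a span $F\leftarrow H\rightarrow G$ in $\mathrm{diag}(\mathcal{M})$ of maps which are open up to homotopy, then $F$ and $G$ are bisimilar up to homotopy.
   Context: For a category $\mathcal{K}$, $\mathrm{diag}(\mathcal{K})$ has as objects functors $F:\underline{I}\to\mathcal{K}$ from small categories; a morphism from $F:\underline{I}_1\to\mathcal{K}$ to $G:\underline{I}_2\to\mathcal{K}$ is a pair $(f,\mu)$ with $f:\underline{I}_1\to\underline{I}_2$ a functor and $\mu:F\Rightarrow G\circ f$ a natural transformation; composition $(g,\nu)(f,\mu)=(gf,(\nu f)\odot\mu)$. A morphism $(f,\mu):F\to G$ is open if $f$ is surjective on objects, every morphism $f(i)\to j'$ of $\underline{I}_2$ is the image $f(\phi)$ of some morphism $\phi:i\to j$ of $\underline{I}_1$, and $\mu$ is a natural isomorphism. Two objects $F:\underline{I}\to\mathcal{K}$, $G:\underline{J}\to\mathcal{K}$ are bisimilar if there is a set $\mathcal{R}$ of triples $(i,\eta,j)$, $i\in\underline{I}$, $j\in\underline{J}$, $\eta:F(i)\cong G(j)$ an isomorphism, such that every object of $\underline{I}$ and every object of $\underline{J}$ occurs in some triple; for every $(i,\eta,j)\in\mathcal{R}$ and $\phi:i\to i'$ there are $(i',\eta',j')\in\mathcal{R}$ and $\psi:j\to j'$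 with $\eta'F(\phi)=G(\psi)\eta$; and symmetrically for every $(i,\eta,j)\in\mathcal{R}$ and $\psi:j\to j'$ there are $(i',\eta',j')\in\mathcal{R}$ and $\phi:i\to i'$ with $\eta'F(\phi)=G(\psi)\eta$. A morphism $(f,\mu):F\to G$ of $\mathrm{diag}(\mathcal{M})$ is open up to homotopy if $(f,h\mu):h\circ F\to h\circ G$ is open in $\mathrm{diag}(\mathbf{Ho}(\mathcal{M}))$; $F,G$ are bisimilar up to homotopy if $h\circ F$ and $h\circ G$ are bisimilar. *)

Set Implicit Arguments.
Unset Strict Implicit.

Record Category := {
  ob :> Type;
  hom : ob -> ob -> Type;
  idm : forall x, hom x x;
  cmp : forall x y z, hom y z -> hom x y -> hom x z;
  cmp_id_l : forall x y (f : hom x y), cmp (idm y) f = f;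
  cmp_id_r : forall x y (f : hom x y), cmp f (idm x) = f;
  cmp_assoc : forall x y z w (f : hom x y) (g : hom y z) (k : hom z w),
      cmp k (cmp g f) = cmp (cmp k g) f
}.
Arguments hom {c} x y.
Arguments idm {c} x.
Arguments cmp {c x y z} g f.
Notation "g \o f" := (cmp g f) (at level 40, left associativity).

Definition isIso {C : Category} {x y : C} (f : hom x y) : Prop :=
  exists g : hom y x, g \o f = idm x /\ f \o g = idm y.

Record Functor (C D : Category) := {
  fob :> C -> D;
  fmap : forall x y, hom x y -> hom (fob x) (fob y);
  fmap_id : forall x, fmap (idm x) = idm (fob x);
  fmap_cmp : forall x y z (f : hom x y) (g : hom y z),
      fmap (g \o f) = fmap g \o fmap f
}.
Arguments fmap {C D} f0 {x y} _.

Definition compF {C D E : Category} (F : Functor C D) (G : Functor D E)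
  : Functor C E.
Proof.
  refine {| fob := fun x => G (F x);
            fmap := fun x y f => fmap G (fmap F f) |}.
  - intros x; rewrite !fmap_id; reflexivity.
  - intros x y z f g; rewrite !fmap_cmp; reflexivity.
Defined.

Record NatTrans {C D : Category} (F G : Functor C D) := {
  ntc :> forall x, hom (F x) (G x);
  nt_nat : forall x y (f : hom x y), ntc y \o fmap F f = fmap G f \o ntc x
}.

Definition hcast {C : Category} {x x' y y' : C} (ex : x = x') (ey : y = y')
  (f : hom x y) : hom x' y' :=
  match ex in _ = x1 return hom x1 y' with
  | eq_refl => match ey in _ = y1 return hom x y1 with eq_refl => f end
  end.

Definition feq {C D : Category} (F G : Functor C D) : Prop :=
  exists e : forall x, F x = G x,
    forall x y (f : hom x y), hcast (e x) (e y) (fmap F f) = fmap G f.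

Definition opCat (C : Category) : Category.
Proof.
  refine {| ob := ob C; hom := fun x y => @hom C y x; idm := fun x => @idm C x;
            cmp := fun x y z g f => @cmp C z y x f g |}.
  - intros; apply cmp_id_r.
  - intros; apply cmp_id_l.
  - intros; symmetry; apply cmp_assoc.
Defined.

Definition has_terminal (C : Category) : Prop :=
  exists t : C, forall x : C, exists u : hom x t, forall u' : hom x t, u' = u.

Definition has_binary_products (C : Category) : Prop :=
  forall a b : C, exists (p : C) (pa : hom p a) (pb : hom p b),
    forall (x : C) (f : hom x a) (g : hom x b),
      exists u : hom x p, (pa \o u = f /\ pb \o u = g) /\
        forall u' : hom x p, pa \o u' = f -> pb \o u' = g -> u' = u.

Definition has_equalizers (C : Category) : Prop :=
  forall (a b : C) (f g : hom a b), exists (e : C) (m : hom e a),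
    f \o m = g \o m /\
    forall (x : C) (k : hom x a), f \o k = g \o k ->
      exists u : hom x e, m \o u = k /\ forall u' : hom x e, m \o u' = k -> u' = u.

Definition has_finite_limits (C : Category) : Prop :=
  has_terminal C /\ has_binary_products C /\ has_equalizers C.

Definition has_finite_colimits (C : Category) : Prop :=
  has_finite_limits (opCat C).

Definition morClass (C : Category) := forall x y : C, hom x y -> Prop.

Definition is_retract {C : Category} {a b c d : C} (f : hom a b) (g : hom c d) : Prop :=
  exists (i : hom a c) (r : hom c a) (i' : hom b d) (r' : hom d b),
    r \o i = idm a /\ r' \o i' = idm b /\ g \o i = i' \o f /\ f \o r = r' \o g.

Definition lifts {C : Category} {a b x y : C} (i : hom a b) (p : hom x y) : Prop :=
  forall (u : hom a x) (v : hom b y), p \o u = v \o i ->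
    exists l : hom b x, l \o i = u /\ p \o l = v.

Definition retract_closed {C : Category} (K : morClass C) : Prop :=
  forall (a b c d : C) (f : hom a b) (g : hom c d), is_retract f g -> K _ _ g -> K _ _ f.

Record ModelStructure (C : Category) := {
  weq : morClass C;
  cof : morClass C;
  fib : morClass C;
  MC1_lim : has_finite_limits C;
  MC1_colim : has_finite_colimits C;
  MC2_comp : forall (x y z : C) (f : hom x y) (g : hom y z),
      weq f -> weq g -> weq (g \o f);
  MC2_left : forall (x y z : C) (f : hom x y) (g : hom y z),
      weq f -> weq (g \o f) -> weq g;
  MC2_right : forall (x y z : C) (f : hom x y) (g : hom y z),
      weq g -> weq (g \o f) -> weq f;
  MC3_weq : retract_closed weq;
  MC3_cof : retract_closed cof;
  MC3_fib : retract_closed fib;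
  MC4_cof : forall (a b x y : C) (i : hom a b) (p : hom x y),
      cof i -> fib p -> weq p -> lifts i p;
  MC4_fib : forall (a b x y : C) (i : hom a b) (p : hom x y),
      cof i -> weq i -> fib p -> lifts i p;
  MC5_cof : forall (x y : C) (f : hom x y), exists (z : C) (i : hom x z) (p : hom z y),
      f = p \o i /\ cof i /\ weq i /\ fib p;
  MC5_fib : forall (x y : C) (f : hom x y), exists (z : C) (i : hom x z) (p : hom z y),
      f = p \o i /\ cof i /\ fib p /\ weq p
}.
Arguments weq {C} m {x y} f.
Arguments cof {C} m {x y} f.
Arguments fib {C} m {x y} f.

Definition is_localization {C : Category} (W : morClass C) (D : Category)
  (h : Functor C D) : Prop :=
  (forall (x y : C) (f : hom x y), W x y f -> isIso (fmap h f)) /\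
  forall (E : Category) (G : Functor C E),
    (forall (x y : C) (f : hom x y), W x y f -> isIso (fmap G f)) ->
    exists G' : Functor D E, feq (compF h G') G /\
      forall G'' : Functor D E, feq (compF h G'') G -> feq G'' G'.

Arguments is_localization {C} W D h.

(* An object of diag(K) is a functor F : I -> K from a (small) category I. *)
Record DiagMor {K I1 I2 : Category} (F : Functor I1 K) (G : Functor I2 K) := {
  dm_fun : Functor I1 I2;
  dm_nt : NatTrans F (compF dm_fun G)
}.
Arguments dm_fun {K I1 I2 F G} d.
Arguments dm_nt {K I1 I2 F G} d.

Definition is_open {K I1 I2 : Category} {F : Functor I1 K} {G : Functor I2 K}
  (m : DiagMor F G) : Prop :=
  (forall j : I2, exists i : I1, dm_fun m i = j) /\
  (forall (i : I1) (j' : I2) (g : hom (dm_fun m i) j'),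
     exists (j : I1) (e : dm_fun m j = j') (phi : hom i j),
       hcast eq_refl e (fmap (dm_fun m) phi) = g) /\
  (forall i : I1, isIso (dm_nt m i)).

Definition whiskerNT {K L I1 I2 : Category} (h : Functor K L)
  (F : Functor I1 K) (G : Functor I2 K) (f : Functor I1 I2)
  (mu : NatTrans F (compF f G)) :
  NatTrans (compF F h) (compF f (compF G h)).
Proof.
  refine (@Build_NatTrans _ _ (compF F h) (compF f (compF G h))
            (fun i => fmap h (mu i)) _).
  intros x y phi; simpl.
  rewrite <- !fmap_cmp. f_equal. exact (nt_nat mu phi).
Defined.

Definition diag_whisker {K L I1 I2 : Category} (h : Functor K L)
  {F : Functor I1 K} {G : Functor I2 K} (m : DiagMor F G)
  : DiagMor (compF F h) (compF G h) :=
  {| dm_fun := dm_fun m; dm_nt := whiskerNT h (dm_nt m) |}.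

Definition open_up_to_homotopy {M HoM I1 I2 : Category} (h : Functor M HoM)
  {F : Functor I1 M} {G : Functor I2 M} (m : DiagMor F G) : Prop :=
  is_open (diag_whisker h m).

(* The set R of triples (i, eta, j) is a relation R i j eta, all of whose
   members eta are isomorphisms. *)
Definition bisimilar {K I J : Category} (F : Functor I K) (G : Functor J K) : Prop :=
  exists R : forall (i : I) (j : J), hom (F i) (G j) -> Prop,
    (forall i j (eta : hom (F i) (G j)), R i j eta -> isIso eta) /\
    (forall i : I, exists j eta, R i j eta) /\
    (forall j : J, exists i eta, R i j eta) /\
    (forall i j (eta : hom (F i) (G j)) (i' : I) (phi : hom i i'), R i j eta ->
       exists (j' : J) (eta' : hom (F i') (G j')) (psi : hom j j'),
         R i' j' eta' /\ eta' \o fmap F phi = fmap G psi \o eta) /\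
    (forall i j (eta : hom (F i) (G j)) (j' : J) (psi : hom j j'), R i j eta ->
       exists (i' : I) (eta' : hom (F i') (G j')) (phi : hom i i'),
         R i' j' eta' /\ eta' \o fmap F phi = fmap G psi \o eta).

Definition bisimilar_up_to_homotopy {M HoM I J : Category} (h : Functor M HoM)
  (F : Functor I M) (G : Functor J M) : Prop :=
  bisimilar (compF F h) (compF G h).


(* For a span F <- H -> G of open maps (p, mu), (q, nu) of diag(K), the triples
   (p l, nu_l o mu_l^-1, q l) form a bisimulation: surjectivity of p and q on
   objects puts every index in some triple, and a move out of p l (resp. q l)
   lifts along the open map to a morphism l -> l' of the index category of H,
   whose image under the other leg is the answering move; the square commutes
   by naturality of mu and nu.  Being open or bisimilar up to homotopy is
   being so in diag(Ho M), so the proposition is this fact for K = Ho M. *)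

Lemma isIso_cmp {C : Category} {x y z : C} (f : hom x y) (g : hom y z) :
  isIso f -> isIso g -> isIso (g \o f).
Proof.
  intros [f' [Hf'f Hff']] [g' [Hg'g Hgg']].
  exists (f' \o g'). split.
  - rewrite cmp_assoc, <- (cmp_assoc g g' f'), Hg'g, cmp_id_r. exact Hf'f.
  - rewrite cmp_assoc, <- (cmp_assoc f' f g), Hff', cmp_id_r. exact Hgg'.
Qed.

Lemma square_inv {C : Category} {a b c d : C} (m : hom a b) (minv : hom b a)
  (m' : hom c d) (minv' : hom d c) (x : hom b d) (y : hom a c) :
  m \o minv = idm b -> minv' \o m' = idm c -> x \o m = m' \o y ->
  minv' \o x = y \o minv.
Proof.
  intros Hmminv Hminv'm' Hsq.
  rewrite <- (cmp_id_r (minv' \o x)), <- Hmminv, cmp_assoc.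
  rewrite <- (cmp_assoc m x minv'), Hsq, (cmp_assoc y m' minv'), Hminv'm', cmp_id_l.
  reflexivity.
Qed.

Section SpanBisimulation.
Context {K I J L : Category} {F : Functor I K} {G : Functor J K} {H : Functor L K}
  (p : DiagMor H F) (q : DiagMor H G).

Inductive span_rel : forall (i : I) (j : J), hom (F i) (G j) -> Prop :=
  span_rel_intro (l : L) (pinv : hom (F (dm_fun p l)) (H l)) :
    pinv \o dm_nt p l = idm (H l) -> dm_nt p l \o pinv = idm _ ->
    span_rel (dm_fun p l) (dm_fun q l) (dm_nt q l \o pinv).

Lemma span_rel_iso (q_iso : forall l, isIso (dm_nt q l))
  (i : I) (j : J) (eta : hom (F i) (G j)) :
  span_rel i j eta -> isIso eta.
Proof.
  intros [l pinv Hpinvp Hppinv].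
  apply isIso_cmp; [exists (dm_nt p l); split; assumption | apply q_iso].
Qed.

Lemma span_rel_at (p_iso : forall l, isIso (dm_nt p l)) (l : L) :
  exists eta, span_rel (dm_fun p l) (dm_fun q l) eta.
Proof.
  destruct (p_iso l) as [pinv [Hpinvp Hppinv]].
  exists (dm_nt q l \o pinv). constructor; assumption.
Qed.

Lemma span_rel_move (p_iso : forall l, isIso (dm_nt p l))
  {l l' : L} (chi : hom l l') {pinv : hom (F (dm_fun p l)) (H l)} :
  dm_nt p l \o pinv = idm _ ->
  exists eta', span_rel (dm_fun p l') (dm_fun q l') eta' /\
    eta' \o fmap F (fmap (dm_fun p) chi)
    = fmap G (fmap (dm_fun q) chi) \o (dm_nt q l \o pinv).
Proof.
  intros Hppinv.
  destruct (p_iso l') as [pinv' [Hpinv'p' Hp'pinv']].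
  exists (dm_nt q l' \o pinv'). split; [constructor; assumption |].
  assert (p_nat := nt_nat (dm_nt p) chi).
  assert (q_nat := nt_nat (dm_nt q) chi).
  simpl in p_nat, q_nat.
  assert (pinv_nat := square_inv _ _ _ _ _ _ Hppinv Hpinv'p' (eq_sym p_nat)).
  rewrite <- cmp_assoc, pinv_nat, cmp_assoc.
  etransitivity; [exact (f_equal (fun t => t \o pinv) q_nat) |].
  symmetry; apply cmp_assoc.
Qed.

End SpanBisimulation.

Lemma span_of_open_bisimilar {K I J L : Category}
  {F : Functor I K} {G : Functor J K} {H : Functor L K}
  (p : DiagMor H F) (q : DiagMor H G) :
  is_open p -> is_open q -> bisimilar F G.
Proof.
  intros [p_surj [p_lift p_iso]] [q_surj [q_lift q_iso]].
  exists (span_rel p q). repeat split.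
  - exact (span_rel_iso p q q_iso).
  - intros i. destruct (p_surj i) as [l <-].
    destruct (span_rel_at p q p_iso l) as [eta Heta]. eauto.
  - intros j. destruct (q_surj j) as [l <-].
    destruct (span_rel_at p q p_iso l) as [eta Heta]. eauto.
  - intros i j eta i' phi Heta; destruct Heta as [l pinv _ Hppinv].
    destruct (p_lift l i' phi) as [l' [<- [chi <-]]].
    destruct (span_rel_move p q p_iso chi Hppinv) as [eta' [Heta' Hsq]].
    exists (dm_fun q l'), eta', (fmap (dm_fun q) chi). split; assumption.
  - intros i j eta j' psi Heta; destruct Heta as [l pinv _ Hppinv].
    destruct (q_lift l j' psi) as [l' [<- [chi <-]]].
    destruct (span_rel_move p q p_iso chi Hppinv) as [eta' [Heta' Hsq]].
    exists (dm_fun p l'), eta', (fmap (dm_fun p) chi). split; assumption.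
Qed.

Theorem proposition5p5 (M : Category) (MS : ModelStructure M)
  (HoM : Category) (h : Functor M HoM)
  (hloc : is_localization (fun x y (f : hom x y) => weq MS f) HoM h)
  (I J L : Category) (F : Functor I M) (G : Functor J M) (H : Functor L M)
  (p : DiagMor H F) (q : DiagMor H G) :
  open_up_to_homotopy h p -> open_up_to_homotopy h q ->
  bisimilar_up_to_homotopy h F G.
Proof.
  exact (span_of_open_bisimilar (diag_whisker h p) (diag_whisker h q)).
Qed.
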